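(* Let $\mathcal{A}$ be a finite meet semilattice, $V$ a vector space and $(\pi_a)_{a\in\mathcal{A}}$ a family of projectors of $V$ such that $\pi_a\pi_b=\pi_{a\wedge b}$ for all $a,b\in\mathcal{A}$. Let $(s_a)_{a\in\mathcal{A}}$ be the unique family of endomorphisms with $\pi_a=\sum_{b\le a}s_b$ for all $a$. Then $s_as_b=\delta_{a,b}s_a$ for all $a,b\in\mathcal{A}$. *)

From HB Require Import structures.
From mathcomp Require Import all_boot all_order all_algebra.
Set Implicit Arguments.
Unset Strict Implicit.
Unset Printing Implicit Defensive.

From HB Require Import structures.
From mathcomp Require Import all_boot all_order all_algebra.
Import Order.TTheory GRing.Theory.
Set Implicit Arguments.
Unset Strict Implicit.
Unset Printing Implicit Defensive.
Local Open Scope ring_scope.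

(* The family s defined by the triangular system
   pi a = \sum_(b <= a) s b is recovered by s b = pi b - \sum_(c < b) s c, so
   every statement about s can be proved by well-founded induction along the
   strict order of A (a finite poset).
   The main theorem is then [s_orthogonal]; idempotence of the pi a and
   linearity of the s a turn out not to be needed. *)

(* In a finite poset, the down-set of c is strictly smaller than that of b
   whenever c < b; this is the measure that makes induction on < terminate. *)
Lemma card_downset_lt (d : Order.disp_t) (T : finPOrderType d) (b c : T) :
  (c < b)%O -> (#|[pred x | (x <= c)%O]| < #|[pred x | (x <= b)%O]|)%N.
Proof.
move=> cb; apply: proper_card; apply/properP; split.
  by apply/subsetP => x; rewrite !inE => xc; exact: le_trans xc (ltW cb).
by exists b; rewrite !inE ?lexx // lt_geF.
Qed.

Lemma finPOrder_ind (d : Order.disp_t) (T : finPOrderType d) (P : T -> Prop) :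
  (forall b, (forall c, (c < b)%O -> P c) -> P b) -> forall b, P b.
Proof.
move=> IH b; move: {-1}#|_| (leqnn #|[pred x | (x <= b)%O]|) => n.
elim: n b => [|n IHn] b Hb; apply: IH => c cb.
  by move: Hb; rewrite leqn0 => /eqP Hb; have := card_downset_lt cb; rewrite Hb.
by apply: IHn; rewrite -ltnS; exact: leq_trans (card_downset_lt cb) Hb.
Qed.

Lemma sum_downset_split (d : Order.disp_t) (T : finPOrderType d)
    (M : nmodType) (b : T) (F : T -> M) :
  \sum_(c | (c <= b)%O) F c = F b + \sum_(c | (c < b)%O) F c.
Proof.
rewrite (bigD1 b) //=; congr (_ + _); apply: eq_bigl => c.
by rewrite lt_def eq_sym andbC.
Qed.

Section LinearFunction.
Variables (R : pzRingType) (U W : lmodType R) (f : U -> W).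
Hypothesis f_lin : linear f.

Lemma linear_add : {morph f : x y / x + y}.
Proof. by move=> x y; have := f_lin 1 x y; rewrite !scale1r. Qed.

Lemma linear_0 : f 0 = 0.
Proof. by apply: (addrI (f 0)); rewrite -linear_add !addr0. Qed.

Lemma linear_sub x y : f (x - y) = f x - f y.
Proof.
have fN z : f (- z) = - f z.
  by have := f_lin (-1) z 0; rewrite addr0 linear_0 addr0 !scaleN1r.
by rewrite linear_add fN.
Qed.

Lemma linear_sum (I : Type) (r : seq I) (P : pred I) (F : I -> U) :
  f (\sum_(i <- r | P i) F i) = \sum_(i <- r | P i) f (F i).
Proof. exact: (big_morph _ linear_add linear_0). Qed.

End LinearFunction.

Section MeetProjectors.
Variables (d : Order.disp_t) (A : finMeetSemilatticeType d).
Variables (K : fieldType) (V : lmodType K) (pi s : A -> V -> V).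
Hypothesis pi_lin : forall a, linear (pi a).
Hypothesis pi_meet : forall a b v, pi a (pi b v) = pi (Order.meet a b) v.
Hypothesis pi_sum_s : forall a v, pi a v = \sum_(b : A | (b <= a)%O) s b v.

Lemma s_rec b v : s b v = pi b v - \sum_(c | (c < b)%O) s c v.
Proof. by rewrite pi_sum_s sum_downset_split addrK. Qed.

Lemma pi_s a b v : pi a (s b v) = if (b <= a)%O then s b v else 0.
Proof.
elim/(@finPOrder_ind _ A): b a => b IH a.
rewrite {1}s_rec (linear_sub (pi_lin a)) pi_meet (linear_sum (pi_lin a)).
rewrite (eq_bigr (fun c => if (c <= a)%O then s c v else 0)); last first.
  by move=> c cb; exact: IH.
rewrite -big_mkcondr /=; case: ifP => ba.
  (* b <= a: pi (a `&` b) = pi b, and every c < b lies below a. *)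
  rewrite (meet_idPr ba) [in RHS]s_rec; congr (_ - _); apply: eq_bigl => c.
  by case cb: (c < b)%O => //=; exact: le_trans (ltW cb) ba.
(* otherwise: c <= a `&` b exactly when c < b and c <= a, so both sides agree. *)
rewrite pi_sum_s; apply/eqP; rewrite subr_eq0; apply/eqP; apply: eq_bigl => c.
rewrite lexI lt_neqAle; case: (eqVneq c b) => [->|_]; first by rewrite ba.
by rewrite andbC.
Qed.

Lemma s_orthogonal a b v : s a (s b v) = if a == b then s a v else 0.
Proof.
elim/(@finPOrder_ind _ A): a => a IH.
rewrite (s_rec a (s b v)) pi_s.
(* Only the summand c = b can survive in \sum_(c < a) s c (s b v). *)
have strict_part : \sum_(c | (c < a)%O) s c (s b v)
                   = if (b < a)%O then s b v else 0.
  rewrite (eq_bigr (fun c => if c == b then s b v else 0)); last first.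
    by move=> c ca; rewrite IH //; case: eqP => [->|].
  rewrite -big_mkcondr /=; case: ifP => ba.
    by rewrite (big_pred1 b) // => c /=; case: (eqVneq c b) => [->|_]; rewrite ?ba ?andbF.
  by rewrite big_pred0 // => c; case: (eqVneq c b) => [->|_]; rewrite ?ba ?andbF.
rewrite strict_part; case: (eqVneq a b) => [->|ab]; first by rewrite lexx ltxx subr0.
by rewrite lt_neqAle eq_sym ab /=; case: ifP; rewrite subrr.
Qed.

End MeetProjectors.

Theorem mainTheorem6 (d : Order.disp_t) (A : finMeetSemilatticeType d)
  (K : fieldType) (V : lmodType K)
  (pi : A -> V -> V) (s : A -> V -> V)
  (pi_lin : forall a, linear (pi a))
  (pi_proj : forall a v, pi a (pi a v) = pi a v)
  (pi_meet : forall a b v, pi a (pi b v) = pi (Order.meet a b) v)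
  (s_lin : forall a, linear (s a))
  (pi_s : forall a v, pi a v = \sum_(b : A | (b <= a)%O) s b v) :
  forall a b v, s a (s b v) = (if a == b then s a v else 0).
Proof. exact: s_orthogonal pi_lin pi_meet pi_s. Qed.
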